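(* Let $X\in\mathbb{R}^{n\times p}$ with $n>p$ and $X^TX$ invertible, let $Y=({\bf y}_1,\dots,{\bf y}_r)\in\mathbb{R}^{n\times r}$ with columns ${\bf y}_c\in\mathbb{R}^n$, let $D=(D_1,\ldots,D_Q)$ be a fixed partition of $\{1,\ldots,r\}$, and let $\gamma\ge 0$ be fixed. Let $\dot{\boldsymbol\beta}_c=(X^TX)^{-1}X^T{\bf y}_c$ be the ordinary least squares estimate for response $c$, $c=1,\dots,r$, and let $\bar B=(\bar{\boldsymbol\beta}_1,\ldots,\bar{\boldsymbol\beta}_r)\in\mathbb{R}^{p\times r}$ be the minimizer over $B=(\boldsymbol\beta_1,\dots,\boldsymbol\beta_r)\in\mathbb{R}^{p\times r}$ of $$\frac{1}{2n}\sum_{i=1}^n\sum_{c=1}^r (y_{ic}-{\bf x}_i^T\boldsymbol\beta_c)^2+\frac{\gamma}{2n}\sum_{q=1}^Q\frac{1}{|D_q|}\sum_{l,m\in D_q}\|X(\boldsymbol\beta_l-\boldsymbol\beta_m)\|_2^2$$ (this is the objective with lasso parameter $\delta=0$). Then for every $q$ and every $l\in D_q$, $$\bar{\boldsymbol\beta}_l=\dot{\boldsymbol\beta}_l+\frac{2\gamma}{(1+2\gamma)|D_q|}\sum_{c\in D_q,\,c\neq l}(\dot{\boldsymbol\beta}_c-\dot{\boldsymbol\beta}_l).$$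
   Context: ${\bf x}_i^T$ denotes the $i$th row of $X$ and $y_{ic}$ the $(i,c)$ entry of $Y$. The inner sum $\sum_{l,m\in D_q}$ runs over all ordered pairs $(l,m)$ with $l,m\in D_q$. Standing assumptions of the paper: the columns of $Y$ and of $X$ are centered ($\sum_i y_{ik}=0$, $\sum_i x_{ij}=0$) and $\sum_i x_{ij}^2\le n$. $|D_q|$ is the cardinality of $D_q$. *)

From HB Require Import structures.
From mathcomp Require Import all_boot all_order all_algebra.
Set Implicit Arguments. Unset Strict Implicit. Unset Printing Implicit Defensive.
Import Order.TTheory GRing.Theory Num.Theory.
Local Open Scope ring_scope.

Definition sqnorm (R : realFieldType) (n : nat) (v : 'cV[R]_n) : R :=
  \sum_(i < n) v i 0 ^+ 2.

Definition ols (R : realFieldType) (n p r : nat)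
  (X : 'M[R]_(n, p)) (Y : 'M[R]_(n, r)) : 'M[R]_(p, r) :=
  invmx (X^T *m X) *m X^T *m Y.

Definition objective (R : realFieldType) (n p r : nat)
  (X : 'M[R]_(n, p)) (Y : 'M[R]_(n, r)) (P : {set {set 'I_r}}) (gamma : R)
  (B : 'M[R]_(p, r)) : R :=
  (2 * n%:R)^-1 * \sum_(i < n) \sum_(c < r) (Y i c - (X *m B) i c) ^+ 2
  + gamma / (2 * n%:R) *
    \sum_(D in P) (#|D|%:R)^-1 *
      \sum_(l in D) \sum_(m in D) sqnorm (X *m (col l B - col m B)).

From HB Require Import structures.
From mathcomp Require Import all_boot all_order all_algebra.
From mathcomp Require Import ring.
Import Order.TTheory GRing.Theory Num.Theory.
Set Implicit Arguments. Unset Strict Implicit. Unset Printing Implicit Defensive.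
Local Open Scope ring_scope.

(* The objective is a quadratic function of B that splits into independent
   pieces, one for each block of the partition ([block_loss]).  On every block
   the explicit candidate [fused_ols] solves the normal equations: the
   gradient of the fusion penalty in column c is proportional to
   X^T X (|D| b_c - sum_(j in D) b_j), and fusion leaves the block sum of the
   OLS coefficients unchanged ([sum_fused]).
   Expanding around the candidate therefore produces no cross term,
     objective (fused_ols + H) = objective fused_ols + a quadratic form in X H,
   and that form dominates (2n)^-1 * sum_c ||X h_c||^2.  Minimality of Bbar
   forces X h_c = 0, and invertibility of X^T X gives h_c = 0. *)

Section Fusion.
Variables (R : numFieldType) (V : lmodType R) (I : finType).
Variables (D : {set I}) (g : R) (b : I -> V).

Definition fused (c : I) : V :=
  b c + (2 * g / ((1 + 2 * g) * #|D|%:R)) *: \sum_(j in D | j != c) (b j - b c).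

Lemma fusedE c : c \in D ->
  fused c = b c - (2 * g / ((1 + 2 * g) * #|D|%:R)) *: (b c *+ #|D| - \sum_(j in D) b j).
Proof.
move=> cD; rewrite /fused -scalerN opprB; congr (_ + _ *: _).
by rewrite -sumr_const -sumrB [RHS](bigD1 c) //= subrr add0r.
Qed.

Lemma sum_fused : \sum_(c in D) fused c = \sum_(c in D) b c.
Proof.
rewrite (eq_bigr _ fusedE) sumrB -scaler_sumr sumrB sumr_const sumrMnl.
by rewrite subrr scaler0 subr0.
Qed.

Lemma fused_normal_eq c : 0 <= g -> c \in D ->
  fused c + (2 * (g / #|D|%:R)) *: (fused c *+ #|D| - \sum_(j in D) fused j) = b c.
Proof.
move=> g0 cD; rewrite sum_fused fusedE //.
set w := 2 * g / _; set v := _ - \sum_(j in D) b j.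
have D0 : #|D|%:R != 0 :> R by rewrite pnatr_eq0 -lt0n; apply/card_gt0P; exists c.
have g1 : 1 + 2 * g != 0 by rewrite gt_eqF // ltr_wpDr ?mulr_ge0.
have -> : (b c - w *: v) *+ #|D| - \sum_(j in D) b j = (1 - w * #|D|%:R) *: v.
  by rewrite mulrnBl addrAC -/v -scaler_nat scalerA scalerBl scale1r mulrC.
rewrite scalerA -addrA -scaleNr -scalerDl.
suff -> : - w + 2 * (g / #|D|%:R) * (1 - w * #|D|%:R) = 0 by rewrite scale0r addr0.
by rewrite /w; field; rewrite D0 g1.
Qed.

End Fusion.

Section InnerProduct.
Variables (R : realFieldType) (m : nat).
Implicit Types u v w : 'cV[R]_m.

Definition dotv u v : R := (u^T *m v) 0 0.

Lemma dotvE u v : dotv u v = \sum_i u i 0 * v i 0.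
Proof. by rewrite /dotv mxE; apply: eq_bigr => i _; rewrite mxE. Qed.

Lemma dotvC u v : dotv u v = dotv v u.
Proof. by rewrite !dotvE; apply: eq_bigr => i _; rewrite mulrC. Qed.

Lemma dotvDl u w v : dotv (u + w) v = dotv u v + dotv w v.
Proof. by rewrite !dotvE -big_split; apply: eq_bigr => i _; rewrite mxE mulrDl. Qed.

Lemma dotvBl u w v : dotv (u - w) v = dotv u v - dotv w v.
Proof. by rewrite !dotvE -sumrB; apply: eq_bigr => i _; rewrite !mxE mulrBl. Qed.

Lemma dotvZl a u v : dotv (a *: u) v = a * dotv u v.
Proof. by rewrite !dotvE mulr_sumr; apply: eq_bigr => i _; rewrite mxE mulrA. Qed.

Lemma dotvMnl u v k : dotv (u *+ k) v = dotv u v *+ k.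
Proof. by rewrite -scaler_nat dotvZl mulr_natl. Qed.

Lemma dotvDr u w v : dotv v (u + w) = dotv v u + dotv v w.
Proof. by rewrite dotvC dotvDl !(dotvC v). Qed.

Lemma dotvBr u w v : dotv v (u - w) = dotv v u - dotv v w.
Proof. by rewrite dotvC dotvBl !(dotvC v). Qed.

Lemma dotv0l v : dotv 0 v = 0.
Proof. by rewrite -(scale0r 0) dotvZl mul0r. Qed.

Lemma dotv_suml (I : finType) (A : pred I) (F : I -> 'cV[R]_m) v :
  dotv (\sum_(i in A) F i) v = \sum_(i in A) dotv (F i) v.
Proof.
rewrite dotvE; under eq_bigr do rewrite summxE mulr_suml.
by rewrite exchange_big; apply: eq_bigr => i _; rewrite dotvE.
Qed.

Lemma sqnorm_dotv v : sqnorm v = dotv v v.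
Proof. by rewrite /sqnorm dotvE; apply: eq_bigr => i _; rewrite expr2. Qed.

Lemma sqnormD u v : sqnorm (u + v) = sqnorm u + 2 * dotv u v + sqnorm v.
Proof. rewrite !sqnorm_dotv dotvDl !dotvDr (dotvC v u); ring. Qed.

Lemma sqnormB u v : sqnorm (u - v) = sqnorm u - 2 * dotv u v + sqnorm v.
Proof. rewrite !sqnorm_dotv dotvBl !dotvBr (dotvC v u); ring. Qed.

Lemma sqnormN v : sqnorm (- v) = sqnorm v.
Proof. by apply: eq_bigr => i _; rewrite mxE sqrrN. Qed.

Lemma sqnorm_ge0 v : 0 <= sqnorm v.
Proof. by apply: sumr_ge0 => i _; apply: sqr_ge0. Qed.

Lemma sqnorm_eq0 v : sqnorm v = 0 -> v = 0.
Proof.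
move=> v0; apply/colP => i; rewrite mxE.
by apply/eqP; rewrite -sqrf_eq0; apply/eqP/(psumr_eq0P _ v0) => // j _; apply: sqr_ge0.
Qed.

Lemma sum_pairwise_dotv (I : finType) (D : {set I}) (a e : I -> 'cV[R]_m) :
  \sum_(l in D) \sum_(j in D) dotv (a l - a j) (e l - e j) =
  2 * \sum_(l in D) dotv (a l *+ #|D| - \sum_(j in D) a j) (e l).
Proof.
under eq_bigr do under eq_bigr do rewrite dotvBl !dotvBr.
under eq_bigr do rewrite !sumrB sumr_const.
under [in RHS]eq_bigr do rewrite dotvBl dotvMnl dotv_suml.
rewrite !sumrB sumr_const -!sumrMnl [X in _ - X - _]exchange_big /=.
move: (\sum_(i in D) _ *+ _) (\sum_(j in D) \sum_(i in D) _) => x y; ring.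
Qed.

End InnerProduct.

Lemma dotv_mulmx (R : realFieldType) m k (A : 'M[R]_(m, k)) u v :
  dotv u (A *m v) = dotv (A^T *m u) v.
Proof. by rewrite /dotv trmx_mul trmxK mulmxA. Qed.

Lemma col_mulmx (R : pzRingType) m k s (A : 'M[R]_(m, k)) (B : 'M[R]_(k, s)) j :
  col j (A *m B) = A *m col j B.
Proof. by rewrite !colE mulmxA. Qed.

Section BlockLoss.
Variables (R : realFieldType) (m s : nat) (D : {set 'I_s}) (k : R).

Definition block_loss (Z A : 'M[R]_(m, s)) : R :=
  \sum_(c in D) sqnorm (col c Z - col c A)
  + k * \sum_(l in D) \sum_(j in D) sqnorm (col l A - col j A).

Lemma block_lossD Z A E :
  block_loss Z (A + E) = block_loss Z A + block_loss 0 E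
  - 2 * \sum_(c in D) dotv (col c Z - col c A
                 - (2 * k) *: (col c A *+ #|D| - \sum_(j in D) col j A)) (col c E).
Proof.
have fitD : \sum_(c in D) sqnorm (col c Z - col c (A + E)) =
    \sum_(c in D) sqnorm (col c Z - col c A)
    - 2 * \sum_(c in D) dotv (col c Z - col c A) (col c E)
    + \sum_(c in D) sqnorm (col c 0 - col c E).
  rewrite mulr_sumr -sumrB -big_split; apply: eq_bigr => c _ /=.
  by rewrite raddfD opprD addrA [LHS]sqnormB raddf0 sub0r sqnormN.
have penaltyD : \sum_(l in D) \sum_(j in D) sqnorm (col l (A + E) - col j (A + E)) =
    \sum_(l in D) \sum_(j in D) sqnorm (col l A - col j A)
    + 2 * (2 * \sum_(l in D) dotv (col l A *+ #|D| - \sum_(j in D) col j A) (col l E))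
    + \sum_(l in D) \sum_(j in D) sqnorm (col l E - col j E).
  rewrite -(sum_pairwise_dotv D (fun c => col c A) (fun c => col c E)) mulr_sumr -!big_split.
  apply: eq_bigr => l _; rewrite mulr_sumr -!big_split; apply: eq_bigr => j _ /=.
  by rewrite [col l _]raddfD [col j _]raddfD opprD addrACA [LHS]sqnormD.
have crossE : \sum_(c in D) dotv (col c Z - col c A
                 - (2 * k) *: (col c A *+ #|D| - \sum_(j in D) col j A)) (col c E) =
    \sum_(c in D) dotv (col c Z - col c A) (col c E)
    - 2 * k * \sum_(c in D) dotv (col c A *+ #|D| - \sum_(j in D) col j A) (col c E).
  by rewrite mulr_sumr -sumrB; apply: eq_bigr => c _; rewrite [LHS]dotvBl dotvZl.
rewrite /block_loss fitD penaltyD crossE.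
move: (\sum_(c in D) sqnorm _) (\sum_(c in D) dotv _ _) => s1 s2.
move: (\sum_(c in D) sqnorm _) (\sum_(c in D) dotv _ _) => s3 s4.
move: (\sum_(l in D) \sum_(j in D) _) (\sum_(l in D) \sum_(j in D) _) => s5 s6.
ring.
Qed.

Lemma block_loss0_ge E : 0 <= k ->
  \sum_(c in D) sqnorm (col c E) <= block_loss 0 E.
Proof.
move=> k0; rewrite /block_loss; under [X in _ <= X + _]eq_bigr do rewrite raddf0 sub0r sqnormN.
by rewrite lerDl mulr_ge0 // !sumr_ge0 // => l _; rewrite sumr_ge0 // => j _; apply: sqnorm_ge0.
Qed.

Lemma block_loss0_ge0 E : 0 <= k -> 0 <= block_loss 0 E.
Proof.
move=> k0; apply: le_trans (block_loss0_ge E k0).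
by apply: sumr_ge0 => c _; apply: sqnorm_ge0.
Qed.

Lemma block_loss0_eq0 E : 0 <= k -> block_loss 0 E = 0 -> forall c, c \in D -> col c E = 0.
Proof.
move=> k0 E0 c cD; apply: sqnorm_eq0; move: c cD; apply: psumr_eq0P.
  by move=> c _; apply: sqnorm_ge0.
have := block_loss0_ge E k0; rewrite E0 => le0.
by apply/le_anti; rewrite le0 sumr_ge0 // => c _; apply: sqnorm_ge0.
Qed.

End BlockLoss.

Section FusedRegression.
Variables (R : realFieldType) (n p r : nat) (X : 'M[R]_(n, p)) (Y : 'M[R]_(n, r)).
Variables (P : {set {set 'I_r}}) (gamma : R).
Hypothesis partP : partition P [set: 'I_r].

Lemma objective_blocks B : objective X Y P gamma B =
  (2 * n%:R)^-1 * \sum_(E in P) block_loss E (gamma / #|E|%:R) Y (X *m B).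
Proof.
case/and3P: partP => /eqP coverP trivP _.
rewrite /objective /block_loss big_split /= mulrDr; congr (_ * _ + _).
  rewrite -big_trivIset // coverP exchange_big /=.
  apply: eq_big => [c | c _]; first by rewrite in_setT.
  by apply: eq_bigr => i _; rewrite !mxE.
rewrite !mulr_sumr; apply: eq_bigr => E _.
under [in RHS]eq_bigr do under eq_bigr do rewrite !col_mulmx -mulmxBr.
by move: (\sum_(l in E) _) => S; ring.
Qed.

Definition fused_ols : 'M[R]_(p, r) :=
  \matrix_(i, c) fused (pblock P c) gamma (fun j => col j (ols X Y)) c i 0.

Lemma col_fused_ols E c : E \in P -> c \in E ->
  col c fused_ols = fused E gamma (fun j => col j (ols X Y)) c.
Proof.
case/and3P: partP => _ trivP _ EP cE.
by apply/colP => i; rewrite !mxE (def_pblock trivP EP cE).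
Qed.

Hypothesis XtX_unit : X^T *m X \in unitmx.
Hypothesis gamma_ge0 : 0 <= gamma.

Lemma mulmx_ols : X^T *m X *m ols X Y = X^T *m Y.
Proof. by rewrite /ols !mulmxA mulmxV // mul1mx. Qed.

Lemma fused_ols_normal_eq E c : E \in P -> c \in E ->
  X^T *m (col c Y - col c (X *m fused_ols)
          - (2 * (gamma / #|E|%:R)) *: (col c (X *m fused_ols) *+ #|E|
                                        - \sum_(j in E) col j (X *m fused_ols))) = 0.
Proof.
move=> EP cE; set U := fused_ols; set t := 2 * _.
rewrite (eq_bigr _ (fun j _ => col_mulmx X U j)) !col_mulmx.
rewrite -raddfMn -mulmx_sumr -mulmxBr scalemxAr -addrA -opprD -mulmxDr mulmxBr mulmxA.
rewrite (col_fused_ols EP cE) (eq_bigr _ (fun j jE => col_fused_ols EP jE)).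
by rewrite fused_normal_eq // -col_mulmx -mulmx_ols col_mulmx subrr.
Qed.

Lemma objective_fused_olsD H :
  objective X Y P gamma (fused_ols + H) = objective X Y P gamma fused_ols
    + (2 * n%:R)^-1 * \sum_(E in P) block_loss E (gamma / #|E|%:R) 0 (X *m H).
Proof.
rewrite !objective_blocks -mulrDr -big_split /=; congr (_ * _); apply: eq_bigr => E EP.
rewrite mulmxDr block_lossD big1 ?mulr0 ?subr0 // => c cE.
by rewrite (col_mulmx X H) dotv_mulmx fused_ols_normal_eq // dotv0l.
Qed.

End FusedRegression.

Theorem theorem1 (R : realFieldType) (n p r : nat)
  (X : 'M[R]_(n, p)) (Y : 'M[R]_(n, r)) (P : {set {set 'I_r}}) (gamma : R)
  (Bbar : 'M[R]_(p, r)) :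
  (p < n)%N ->
  X^T *m X \in unitmx ->
  partition P [set: 'I_r] ->
  0 <= gamma ->
  (forall k : 'I_r, \sum_(i < n) Y i k = 0) ->
  (forall j : 'I_p, \sum_(i < n) X i j = 0) ->
  (forall j : 'I_p, \sum_(i < n) X i j ^+ 2 <= n%:R) ->
  (forall B : 'M[R]_(p, r), objective X Y P gamma Bbar <= objective X Y P gamma B) ->
  forall D, D \in P -> forall l, l \in D ->
    col l Bbar =
      col l (ols X Y) +
      (2 * gamma / ((1 + 2 * gamma) * #|D|%:R)) *:
        \sum_(c in D | c != l) (col c (ols X Y) - col l (ols X Y)).
Proof.
move=> ltpn XtX_unit partP gamma_ge0 _ _ _ Bbar_min D DP l lD.
set U := fused_ols X Y P gamma; set H := Bbar - U.
have BbarE : Bbar = U + H by rewrite addrC subrK.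
set loss := fun E => block_loss E (gamma / #|E|%:R) 0 (X *m H).
have loss_ge0 E : 0 <= loss E by apply: block_loss0_ge0; rewrite divr_ge0.
have loss_le0 : \sum_(E in P) loss E <= 0.
  have n2_gt0 : 0 < (2 * n%:R)^-1 :> R.
    by rewrite invr_gt0 mulr_gt0 // ltr0n (leq_ltn_trans _ ltpn).
  have := Bbar_min U; rewrite BbarE objective_fused_olsD //.
  by rewrite gerDl pmulr_rle0.
have lossD0 : loss D = 0.
  apply: (psumr_eq0P (fun E _ => loss_ge0 E)) DP.
  by apply/le_anti/andP; split; [exact: loss_le0 | exact: sumr_ge0].
have XH0 : X *m col l H = 0.
  by rewrite -col_mulmx (block_loss0_eq0 _ lossD0) ?divr_ge0.
have H0 : col l H = 0 by rewrite -(mulKmx XtX_unit (col l H)) -mulmxA XH0 !mulmx0.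
by rewrite BbarE raddfD /= H0 addr0 (col_fused_ols X Y gamma partP DP lD).
Qed.
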